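(* For $n\ge 0$ let $U_n \equiv \mathbf{B}Y_0\mathbf{S}\cdots\mathbf{S}\mathbf{I}$ with exactly $n$ copies of $\mathbf{S}$ (the Scott sequence). Then $U_n \neq_\beta U_m$ for all $n\neq m$.
   Context: Untyped $\lambda$-calculus modulo $\alpha$; application associates to the left. $\mathbf{I}\equiv\lambda x.x$, $\mathbf{S}\equiv\lambda xyz.\,xz(yz)$, $\mathbf{B}\equiv\lambda xyz.\,x(yz)$, and $Y_0\equiv\lambda f.\,\omega_f\omega_f$ with $\omega_f\equiv\lambda x.\,f(xx)$ (Curry's fixed point combinator). *)

(* untyped lambda calculus with de Bruijn indices
   (this represents terms modulo alpha-conversion). *)
From Stdlib Require Import Arith Relations.

Inductive term : Type :=
| Var : nat -> term
| App : term -> term -> term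
| Lam : term -> term.

Fixpoint lift (c : nat) (t : term) : term :=
  match t with
  | Var n => if n <? c then Var n else Var (S n)
  | App a b => App (lift c a) (lift c b)
  | Lam a => Lam (lift (S c) a)
  end.

Fixpoint subst (k : nat) (u : term) (t : term) : term :=
  match t with
  | Var n => if n =? k then u else if k <? n then Var (pred n) else Var n
  | App a b => App (subst k u a) (subst k u b)
  | Lam a => Lam (subst (S k) (lift 0 u) a)
  end.

Inductive beta : term -> term -> Prop :=
| beta_redex : forall a b, beta (App (Lam a) b) (subst 0 b a)
| beta_appl : forall a a' b, beta a a' -> beta (App a b) (App a' b)
| beta_appr : forall a b b', beta b b' -> beta (App a b) (App a b')
| beta_lam : forall a a', beta a a' -> beta (Lam a) (Lam a').

Definition beta_eq : term -> term -> Prop := clos_refl_sym_trans term beta.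

Definition I_comb : term := Lam (Var 0).
(* S = \xyz. x z (y z) *)
Definition S_comb : term :=
  Lam (Lam (Lam (App (App (Var 2) (Var 0)) (App (Var 1) (Var 0))))).
(* B = \xyz. x (y z) *)
Definition B_comb : term :=
  Lam (Lam (Lam (App (Var 2) (App (Var 1) (Var 0))))).
(* omega_f = \x. f (x x), with f the variable bound by Y0 *)
Definition omega_f : term := Lam (App (Var 1) (App (Var 0) (Var 0))).
Definition Y0 : term := Lam (App omega_f omega_f).

Fixpoint scott_prefix (n : nat) : term :=
  match n with
  | O => App B_comb Y0
  | S k => App (scott_prefix k) S_comb
  end.

Definition U (n : nat) : term := App (scott_prefix n) I_comb.

(* For n >= 1, U_n reduces to a term that is simply typable once the fixed point
   Y0 (S I) (n = 1), resp. Y0 (S S) (n >= 2), is read as a constant: Y0 (S I) gets the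
   type (o -> o) -> o, and Y0 (S S) gets a type of arity n, for each n >= 2, so that the
   n - 2 copies of S and the final I bring it down to (o -> o) -> o. Unfolding the constant
   preserves its type, so typability is invariant under reduction, and by Church-Rosser a
   common reduct of U_n and U_m would be typable with the constant at arity n and at arity
   m. Replacing the constant by a variable x and normalizing, the number of arguments of x
   in the normal form determines the arity, hence n = m. Finally U_0 I reduces to the
   untypable Omega, its only reduct, while U_n I is typable for n >= 1. *)

From Stdlib Require Import Arith Lia List Relations.
Import ListNotations.

(** * De Bruijn substitution *)

Ltac case_index :=
  repeat match goal with
  | |- context [Nat.ltb ?a ?b] => destruct (Nat.ltb_spec a b)
  | |- context [Nat.eqb ?a ?b] => destruct (Nat.eqb_spec a b)
  end.

Lemma lift_lift t c d : c <= d -> lift c (lift d t) = lift (S d) (lift c t).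
Proof.
  revert c d; induction t; intros c d H; simpl.
  - case_index; cbn [lift subst]; case_index; try reflexivity; lia.
  - f_equal; auto.
  - f_equal; apply IHt; lia.
Qed.

Lemma subst_lift t c u : subst c u (lift c t) = t.
Proof.
  revert c u; induction t; intros c u; simpl.
  - case_index; cbn [lift subst]; case_index; try reflexivity; lia.
  - f_equal; auto.
  - f_equal; auto.
Qed.

Lemma lift_subst_le t c d u : c <= d ->
  lift c (subst d u t) = subst (S d) (lift c u) (lift c t).
Proof.
  revert c d u; induction t; intros c d u H; simpl.
  - case_index; cbn [lift subst]; case_index; try reflexivity; try lia; f_equal; lia.
  - f_equal; auto.
  - f_equal. rewrite IHt by lia. f_equal. symmetry; apply lift_lift; lia.
Qed.

Lemma lift_subst_ge t c d u : d <= c ->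
  lift c (subst d u t) = subst d (lift c u) (lift (S c) t).
Proof.
  revert c d u; induction t; intros c d u H; simpl.
  - case_index; cbn [lift subst]; case_index; try reflexivity; try lia; f_equal; lia.
  - f_equal; auto.
  - f_equal. rewrite IHt by lia. f_equal. symmetry; apply lift_lift; lia.
Qed.

Lemma subst_subst t c d u v : d <= c ->
  subst c v (subst d u t) = subst d (subst c v u) (subst (S c) (lift d v) t).
Proof.
  revert c d u v; induction t; intros c d u v H; simpl.
  - case_index; cbn [lift subst]; case_index; try reflexivity; try lia; try (f_equal; lia).
    subst. rewrite subst_lift. reflexivity.
  - f_equal; auto.
  - f_equal. rewrite IHt by lia. f_equal.
    + symmetry. apply lift_subst_le. lia.
    + f_equal. symmetry; apply lift_lift; lia.
Qed.

(** * Confluence *)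

Notation red := (clos_refl_trans_1n term beta).

Lemma red_trans a b c : red a b -> red b c -> red a c.
Proof. induction 1; eauto using clos_refl_trans_1n. Qed.

Lemma red_appl a a' b : red a a' -> red (App a b) (App a' b).
Proof. induction 1; eauto using clos_refl_trans_1n, beta. Qed.

Lemma red_appr a b b' : red b b' -> red (App a b) (App a b').
Proof. induction 1; eauto using clos_refl_trans_1n, beta. Qed.

Lemma red_app a a' b b' : red a a' -> red b b' -> red (App a b) (App a' b').
Proof. intros. eapply red_trans; [apply red_appl | apply red_appr]; eauto. Qed.

Lemma red_lam a a' : red a a' -> red (Lam a) (Lam a').
Proof. induction 1; eauto using clos_refl_trans_1n, beta. Qed.

Lemma red_beta_eq a b : red a b -> beta_eq a b.
Proof. intros H. apply clos_rt_clos_rst, clos_rt1n_rt, H. Qed.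

Lemma beta_eq_appl a b c : beta_eq a b -> beta_eq (App a c) (App b c).
Proof.
  induction 1.
  - apply rst_step, beta_appl; assumption.
  - apply rst_refl.
  - apply rst_sym; assumption.
  - eapply rst_trans; eassumption.
Qed.

Inductive par : term -> term -> Prop :=
| par_var n : par (Var n) (Var n)
| par_app a a' b b' : par a a' -> par b b' -> par (App a b) (App a' b')
| par_lam a a' : par a a' -> par (Lam a) (Lam a')
| par_beta a a' b b' : par a a' -> par b b' -> par (App (Lam a) b) (subst 0 b' a').

Lemma par_refl t : par t t.
Proof. induction t; constructor; auto. Qed.

Lemma beta_par a b : beta a b -> par a b.
Proof. induction 1; constructor; auto using par_refl. Qed.

Lemma par_red a b : par a b -> red a b.
Proof.
  induction 1.
  - apply rt1n_refl.
  - apply red_app; auto.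
  - apply red_lam; auto.
  - eapply red_trans; [apply red_app; [apply red_lam|]; eauto|].
    apply clos_rt1n_step, beta_redex.
Qed.

Lemma par_lift a a' : par a a' -> forall c, par (lift c a) (lift c a').
Proof.
  induction 1; intros c; simpl; try constructor; auto.
  - apply par_refl.
  - rewrite lift_subst_ge by lia. constructor; auto.
Qed.

Lemma par_subst a a' b b' k : par a a' -> par b b' -> par (subst k b a) (subst k b' a').
Proof.
  intros Ha; revert b b' k; induction Ha; intros c c' k Hc; simpl.
  - destruct (n =? k); [auto|]. destruct (k <? n); apply par_refl.
  - constructor; auto.
  - constructor; apply IHHa, par_lift, Hc.
  - rewrite subst_subst by lia. constructor; auto. apply IHHa1, par_lift, Hc.
Qed.

Fixpoint develop (t : term) : term :=
  match t with
  | Var n => Var n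
  | Lam a => Lam (develop a)
  | App (Lam a) b => subst 0 (develop b) (develop a)
  | App a b => App (develop a) (develop b)
  end.

Lemma par_develop a b : par a b -> par b (develop a).
Proof.
  induction 1; simpl.
  - constructor.
  - destruct a; try (constructor; auto; fail).
    inversion H; subst. inversion IHpar1; subst. constructor; auto.
  - constructor; auto.
  - apply par_subst; auto.
Qed.

Lemma par_strip a b c : par a b -> red a c -> exists d, red b d /\ par c d.
Proof.
  intros Hab Hac. revert b Hab. induction Hac as [a|a a' c Ha _ IH]; intros b Hab.
  - exists b; split; [apply rt1n_refl | auto].
  - destruct (IH (develop a)) as [d [Hd1 Hd2]]; [apply par_develop, beta_par, Ha|].
    exists d; split; auto. eapply red_trans; [apply par_red, par_develop, Hab | auto].
Qed.

Lemma red_confluent a b c : red a b -> red a c -> exists d, red b d /\ red c d.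
Proof.
  intros Hab. revert c. induction Hab as [a|a a' b Ha _ IH]; intros c Hac.
  - exists c; split; auto using rt1n_refl.
  - destruct (par_strip _ _ _ (beta_par _ _ Ha) Hac) as [d [Hd1 Hd2]].
    destruct (IH d Hd1) as [e [He1 He2]].
    exists e; split; auto. eapply red_trans; [apply par_red|]; eauto.
Qed.

Lemma church_rosser a b : beta_eq a b -> exists c, red a c /\ red b c.
Proof.
  induction 1 as [a b H| a | a b _ [c [H1 H2]] | a b c _ [d [H1 H2]] _ [e [H3 H4]]].
  - exists b; split; auto using clos_rt1n_step, rt1n_refl.
  - exists a; split; apply rt1n_refl.
  - eauto.
  - destruct (red_confluent _ _ _ H2 H3) as [f [H5 H6]].
    exists f; split; eapply red_trans; eauto.
Qed.

(** * Simple types with typed constants *)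

Inductive ty := Base | Arr (A B : ty).

(* [const t A] declares the closed term [t] to be a constant of type [A]. *)
Inductive typ (const : term -> ty -> Prop) : list ty -> term -> ty -> Prop :=
| t_var G n A : nth_error G n = Some A -> typ const G (Var n) A
| t_lam G A B b : typ const (A :: G) b B -> typ const G (Lam b) (Arr A B)
| t_app G A B f a : typ const G f (Arr A B) -> typ const G a A -> typ const G (App f a) B
| t_const G t A : const t A -> typ const G t A.

Fixpoint insert_at (k : nat) (A : ty) (G : list ty) : list ty :=
  match k, G with
  | 0, _ => A :: G
  | S k', B :: G' => B :: insert_at k' A G'
  | S _, [] => [A]
  end.

Lemma nth_insert_at_lt k A G n :
  k <= length G -> n < k -> nth_error (insert_at k A G) n = nth_error G n.
Proof.
  revert G n; induction k; intros G n H1 H2; [lia|]. destruct G; simpl in *; [lia|].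
  destruct n; simpl; auto. apply IHk; lia.
Qed.

Lemma nth_insert_at_eq k A G : k <= length G -> nth_error (insert_at k A G) k = Some A.
Proof.
  revert G; induction k; intros G H; [reflexivity|]. destruct G; simpl in *; [lia|].
  apply IHk; lia.
Qed.

Lemma nth_insert_at_gt k A G n :
  k <= length G -> k <= n -> nth_error (insert_at k A G) (S n) = nth_error G n.
Proof.
  revert G n; induction k; intros G n H1 H2; [reflexivity|]. destruct G; simpl in *; [lia|].
  destruct n; [lia|]. simpl. apply IHk; lia.
Qed.

Section Typing.

Variable const : term -> ty -> Prop.
Hypothesis const_lift : forall t A c, const t A -> lift c t = t.
Hypothesis const_subst : forall t A k u, const t A -> subst k u t = t.
Hypothesis const_not_lam : forall a A, ~ const (Lam a) A.
Hypothesis const_beta : forall t A t' G, const t A -> beta t t' -> typ const G t' A.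

Lemma typ_lift G t T c A :
  typ const G t T -> c <= length G -> typ const (insert_at c A G) (lift c t) T.
Proof.
  intros Ht; revert c; induction Ht; intros c Hc; simpl.
  - assert (n < length G) by (apply nth_error_Some; congruence).
    case_index; constructor; [rewrite nth_insert_at_lt | rewrite nth_insert_at_gt]; auto.
  - constructor. apply (IHHt (S c)). simpl; lia.
  - econstructor; eauto.
  - erewrite const_lift by eauto. apply t_const; auto.
Qed.

Lemma typ_subst G k A t T u :
  typ const (insert_at k A G) t T -> k <= length G -> typ const G u A ->
  typ const G (subst k u t) T.
Proof.
  remember (insert_at k A G) as G' eqn:HG.
  intros Ht; revert k G u HG; induction Ht; intros k G0 u HG Hk Hu; subst; simpl.
  - destruct (Nat.eqb_spec n k); [|destruct (Nat.ltb_spec k n)].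
    + subst. rewrite nth_insert_at_eq in H by auto. congruence.
    + destruct n; [lia|]. rewrite nth_insert_at_gt in H by (auto; lia). constructor; auto.
    + rewrite nth_insert_at_lt in H by (auto; lia). constructor; auto.
  - constructor. apply (IHHt (S k) (A0 :: G0)); simpl; auto; try lia.
    apply (typ_lift _ _ _ 0); auto; lia.
  - econstructor; eauto.
  - erewrite const_subst by eauto. apply t_const; auto.
Qed.

Lemma typ_beta G t t' T : beta t t' -> typ const G t T -> typ const G t' T.
Proof.
  intros Hb; revert G T; induction Hb; intros G T Ht;
    inversion Ht as [| | ? C ? ? ? Hf Ha |]; subst;
    try (eapply const_beta; eauto using beta; fail).
  - inversion Hf as [| ? ? ? ? Hbody | | ? ? ? Hc]; subst.
    + eapply typ_subst with (k := 0); simpl; eauto; lia.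
    + exfalso; eapply const_not_lam; eauto.
  - econstructor; eauto.
  - econstructor; eauto.
  - constructor; eauto.
Qed.

Lemma typ_red G t t' T : red t t' -> typ const G t T -> typ const G t' T.
Proof. induction 1; eauto using typ_beta. Qed.

End Typing.

Inductive no_const : term -> ty -> Prop := .

Notation ptyp := (typ no_const).

Lemma ptyp_lift G t T A : ptyp G t T -> ptyp (A :: G) (lift 0 t) T.
Proof.
  intros Ht. apply (typ_lift no_const) with (c := 0); [intros; contradiction | exact Ht | simpl; lia].
Qed.

Lemma ptyp_subst G k A t T u :
  ptyp (insert_at k A G) t T -> k <= length G -> ptyp G u A -> ptyp G (subst k u t) T.
Proof. apply typ_subst; intros; contradiction. Qed.

Lemma ptyp_red G t t' T : red t t' -> ptyp G t T -> ptyp G t' T.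
Proof. apply typ_red; unfold not; intros; contradiction. Qed.

Lemma ptyp_var_inv G n T : ptyp G (Var n) T -> nth_error G n = Some T.
Proof. inversion 1 as [| | |? ? ? []]; auto. Qed.

Lemma ptyp_lam_inv G b T : ptyp G (Lam b) T -> exists A B, T = Arr A B /\ ptyp (A :: G) b B.
Proof. inversion 1 as [|? A B|  |? ? ? []]; eauto. Qed.

Lemma ptyp_app_inv G f a T : ptyp G (App f a) T -> exists A, ptyp G f (Arr A T) /\ ptyp G a A.
Proof. inversion 1 as [| |? A|? ? ? []]; eauto. Qed.

(** * Weak normalization of simply typed terms *)

Fixpoint neutral (t : term) : Prop :=
  match t with
  | Var _ => True
  | App f a => neutral f /\ normal a
  | Lam _ => False
  end
with normal (t : term) : Prop :=
  match t with
  | Var _ => True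
  | App f a => neutral f /\ normal a
  | Lam b => normal b
  end.

Lemma lift_normal t c : (neutral t -> neutral (lift c t)) /\ (normal t -> normal (lift c t)).
Proof.
  revert c; induction t; intros c; simpl.
  - destruct (n <? c); simpl; auto.
  - destruct (IHt1 c), (IHt2 c). split; intros [? ?]; split; auto.
  - split; [tauto|]. apply IHt.
Qed.

Lemma beta_not_normal t t' : beta t t' -> ~ normal t /\ ~ neutral t.
Proof. induction 1; simpl; tauto. Qed.

Fixpoint head (t : term) : term := match t with App f _ => head f | _ => t end.

Fixpoint tsize (A : ty) : nat :=
  match A with Base => 1 | Arr A B => S (tsize A + tsize B) end.

Inductive result_type : ty -> ty -> Prop :=
| result_refl A : result_type A A
| result_arr T A B : result_type T B -> result_type T (Arr A B).

Lemma result_type_size T A : result_type T A -> tsize T <= tsize A.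
Proof. induction 1; simpl; lia. Qed.

Lemma result_type_cod C T A : result_type (Arr C T) A -> result_type T A.
Proof.
  intros H; remember (Arr C T) as X; induction H; subst; constructor; auto using result_type.
Qed.

(* Hereditary substitution: induction on the type of the substituted term, then on the
   term it is substituted into. *)
Definition app_normalizes (A : ty) : Prop :=
  forall G u a B, ptyp G u (Arr A B) -> ptyp G a A -> normal u -> normal a ->
  exists v, red (App u a) v /\ normal v.

Definition subst_normalizes (A : ty) (t : term) : Prop :=
  forall G k u T, k <= length G -> ptyp (insert_at k A G) t T -> ptyp G u A -> normal u ->
  (normal t -> exists v, red (subst k u t) v /\ normal v) /\
  (neutral t -> exists v, red (subst k u t) v /\ normal v /\
     (head t <> Var k -> neutral v) /\ (head t = Var k -> result_type T A)).

Lemma term_eq_dec (x y : term) : {x = y} + {x <> y}.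
Proof. decide equality; apply Nat.eq_dec. Qed.

Section SubstNormalizes.

Variable A : ty.
Hypothesis smaller_app_normalizes : forall C, tsize C < tsize A -> app_normalizes C.

Lemma subst_normalizes_var n : subst_normalizes A (Var n).
Proof.
  intros G k u T Hk Ht Hu Nu. apply ptyp_var_inv in Ht. simpl.
  destruct (Nat.eqb_spec n k) as [->|Hnk].
  - rewrite nth_insert_at_eq in Ht by auto. injection Ht as <-.
    split; intros _; exists u; repeat split; auto using rt1n_refl, result_type; now intros [].
  - destruct (k <? n); split; intros _; eexists;
      (repeat split; [apply rt1n_refl|..]; intros; simpl; auto; congruence).
Qed.

Lemma subst_normalizes_app t1 t2 :
  subst_normalizes A t1 -> subst_normalizes A t2 -> subst_normalizes A (App t1 t2).
Proof.
  intros IH1 IH2 G k u T Hk Ht Hu Nu.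
  destruct (ptyp_app_inv _ _ _ _ Ht) as [C [Ht1 Ht2]].
  destruct (IH1 G k u _ Hk Ht1 Hu Nu) as [_ IHneu1].
  destruct (IH2 G k u _ Hk Ht2 Hu Nu) as [IHnorm2 _].
  enough (Hneu : neutral (App t1 t2) -> exists v, red (subst k u (App t1 t2)) v /\
            normal v /\ (head t1 <> Var k -> neutral v) /\ (head t1 = Var k -> result_type T A)).
  { split; [|exact Hneu]. intros N. destruct (Hneu N) as [v [? [? _]]]. eauto. }
  intros [N1 N2]. simpl.
  destruct (IHneu1 N1) as [v1 [R1 [M1 [Hhead1 Hres1]]]].
  destruct (IHnorm2 N2) as [v2 [R2 M2]].
  destruct (term_eq_dec (head t1) (Var k)) as [E|E].
  - (* the head is the substituted variable: a new redex [v1 v2] of smaller type appears *)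
    assert (HC : tsize C < tsize A).
    { specialize (result_type_size _ _ (Hres1 E)). simpl. lia. }
    assert (T1 : ptyp G v1 (Arr C T)) by (eapply ptyp_red, ptyp_subst; eauto).
    assert (T2 : ptyp G v2 C) by (eapply ptyp_red, ptyp_subst; eauto).
    destruct (smaller_app_normalizes C HC G v1 v2 T T1 T2 M1 M2) as [v [Rv Nv]].
    exists v. repeat split; auto; [|contradiction|].
    + eapply red_trans; [apply red_app|]; eauto.
    + intros _. eapply result_type_cod; eauto.
  - exists (App v1 v2). repeat split; auto using red_app; contradiction.
Qed.

Lemma subst_normalizes_lam b : subst_normalizes A b -> subst_normalizes A (Lam b).
Proof.
  intros IH G k u T Hk Ht Hu Nu.
  destruct (ptyp_lam_inv _ _ _ Ht) as [C [D [-> Hb]]].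
  split; [|simpl; tauto]. intros Nb.
  destruct (IH (C :: G) (S k) (lift 0 u) D) as [IHnorm _]; simpl; auto; try lia.
  - apply ptyp_lift, Hu.
  - apply lift_normal, Nu.
  - destruct (IHnorm Nb) as [v [Rv Nv]]. exists (Lam v). split; [apply red_lam|]; auto.
Qed.

Lemma subst_normalizes_all t : subst_normalizes A t.
Proof.
  induction t; auto using subst_normalizes_var, subst_normalizes_app, subst_normalizes_lam.
Qed.

End SubstNormalizes.

Lemma app_normalizes_all A : app_normalizes A.
Proof.
  induction A as [A IH] using (well_founded_induction (Wf_nat.well_founded_ltof _ tsize)).
  intros G u a B Hu Ha Nu Na. destruct u as [x|f b|b].
  - exists (App (Var x) a). split; [apply rt1n_refl|simpl; auto].
  - exists (App (App f b) a). split; [apply rt1n_refl|]. simpl in *. tauto.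
  - destruct (ptyp_lam_inv _ _ _ Hu) as [C [D [E Hb]]]. injection E as <- <-.
    destruct (subst_normalizes_all A IH b G 0 a B) as [Hnorm _]; simpl; auto; try lia.
    destruct (Hnorm Nu) as [v [Hv Nv]].
    exists v; split; auto. eapply Relation_Operators.rt1n_trans; [apply beta_redex | exact Hv].
Qed.

Lemma weak_normalization G t T : ptyp G t T -> exists v, red t v /\ normal v.
Proof.
  induction 1 as [G n A _|G A B b _ [v [R N]]|G A B f a Hf [v1 [R1 N1]] Ha [v2 [R2 N2]]|G t A []].
  - exists (Var n); split; [apply rt1n_refl|simpl; auto].
  - exists (Lam v). split; [apply red_lam|]; auto.
  - destruct (app_normalizes_all A G v1 v2 B) as [v [R N]];
      eauto using ptyp_red.
    exists v; split; auto. eapply red_trans; [apply red_app|]; eauto.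
Qed.

(** * The Scott sequence *)

Fixpoint contract_at (p : list nat) (t : term) : option term :=
  match p, t with
  | [], App (Lam a) b => Some (subst 0 b a)
  | 0 :: p', App a b => option_map (fun a' => App a' b) (contract_at p' a)
  | 1 :: p', App a b => option_map (fun b' => App a b') (contract_at p' b)
  | 2 :: p', Lam a => option_map Lam (contract_at p' a)
  | _, _ => None
  end.

Lemma contract_at_beta p t t' : contract_at p t = Some t' -> beta t t'.
Proof.
  revert t t'; induction p as [|d p IH]; intros t t' H.
  - destruct t as [| [] |]; try discriminate. injection H as <-. constructor.
  - destruct d as [|[|[|d]]]; destruct t; try discriminate; simpl in H;
      destruct (contract_at p _) eqn:E; try discriminate; injection H as <-;
      constructor; eauto.
Qed.

Fixpoint contract_along (ps : list (list nat)) (t : term) : option term :=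
  match ps with
  | [] => Some t
  | p :: ps' => match contract_at p t with Some t' => contract_along ps' t' | None => None end
  end.

Lemma contract_along_red ps t t' : contract_along ps t = Some t' -> red t t'.
Proof.
  revert t; induction ps as [|p ps IH]; intros t H; simpl in H.
  - injection H as <-. apply rt1n_refl.
  - destruct (contract_at p t) eqn:E; try discriminate.
    eapply Relation_Operators.rt1n_trans; [eapply contract_at_beta|]; eauto.
Qed.

(* [Y0 (S I)] reduces to [fix_SI := omega_SI omega_SI] and [Y0 (S S)] to [fix_SS], where
   [fix_SI -> \z. z (fix_SI z)] and [fix_SS -> \z w. z w (fix_SS z w)]. *)
Definition omega_SI : term := Lam (Lam (App (Var 0) (App (App (Var 1) (Var 1)) (Var 0)))).
Definition fix_SI : term := App omega_SI omega_SI.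
Definition omega_SS : term :=
  Lam (Lam (Lam (App (App (Var 1) (Var 0)) (App (App (App (Var 2) (Var 2)) (Var 1)) (Var 0))))).
Definition fix_SS : term := App omega_SS omega_SS.
Definition Omega : term := App (Lam (App (Var 0) (Var 0))) (Lam (App (Var 0) (Var 0))).

Fixpoint S_chain (h : term) (j : nat) : term :=
  match j with 0 => h | S j => App (S_chain h j) S_comb end.

Definition scott_reduct (n : nat) : term :=
  match n with 0 => fix_SI | S j => App (S_chain fix_SS j) I_comb end.

Lemma red_S_chain h h' j : red h h' -> red (S_chain h j) (S_chain h' j).
Proof. intros H; induction j; simpl; auto using red_appl. Qed.

Lemma scott_prefix_S_chain j : scott_prefix (S (S j)) = S_chain (scott_prefix 2) j.
Proof. induction j as [|j IH]; simpl in *; congruence. Qed.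

Lemma U_succ_red n : red (U (S n)) (scott_reduct n).
Proof.
  destruct n as [|j].
  - apply (contract_along_red [[0;0];[0];[];[1];[1;2;2;0];[];[0;2];[1;2]]).
    vm_compute. reflexivity.
  - unfold U. rewrite scott_prefix_S_chain. apply red_appl, red_S_chain.
    apply (contract_along_red [[0;0];[0];[];[1];[1;2;2;0];[1;2;2];[];[0;2];[1;2]]).
    vm_compute. reflexivity.
Qed.

Lemma U0_I_red : red (App (U 0) I_comb) Omega.
Proof.
  apply (contract_along_red [[0;0];[0];[];[1];[];[0;2];[1;2]]). vm_compute. reflexivity.
Qed.

Lemma Omega_red t : red Omega t -> t = Omega.
Proof.
  intros H. remember Omega as o eqn:E. induction H as [|x y z Hxy _ IH]; subst; auto.
  inversion Hxy as [| ? ? ? Hb | ? ? ? Hb |]; subst; auto;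
    destruct (beta_not_normal _ _ Hb) as [Hn _]; simpl in Hn; tauto.
Qed.

(* For [n >= 2], [fix_SS] has type [fix_ty n] with [z : arg_ty (n-1)] and
   [w : arg_ty (n-2)]; [S] has every type [arg_ty (i+2)] and [I] has type [arg_ty 1]. *)
Fixpoint arg_ty (i : nat) : ty :=
  match i with 0 => Arr Base Base | S i => Arr (arg_ty i) (Arr (fix_ty i) (fix_ty i)) end
with fix_ty (i : nat) : ty :=
  match i with 0 => Base | S i => Arr (arg_ty i) (fix_ty i) end.

Fixpoint arity (A : ty) : nat := match A with Base => 0 | Arr _ B => S (arity B) end.

Lemma arity_fix_ty i : arity (fix_ty i) = i.
Proof. induction i; simpl; auto. Qed.

Inductive fix_const : nat -> term -> ty -> Prop :=
| fix_const_SI : fix_const 1 fix_SI (fix_ty 1)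
| fix_const_SS n : 2 <= n -> fix_const n fix_SS (fix_ty n).

Lemma S_comb_typ const G i : typ const G S_comb (arg_ty (S (S i))).
Proof.
  apply t_lam, t_lam, t_lam. eapply t_app; eapply t_app; apply t_var; reflexivity.
Qed.

Lemma I_comb_typ const G : typ const G I_comb (arg_ty 1).
Proof. apply t_lam, t_var. reflexivity. Qed.

Lemma S_chain_typ const G h j k :
  typ const G h (fix_ty (j + S (S k))) -> typ const G (S_chain h j) (fix_ty (S (S k))).
Proof.
  revert k; induction j as [|j IH]; intros k H; simpl; auto.
  eapply t_app; [apply (IH (S k)); rewrite Nat.add_succ_r; exact H | apply S_comb_typ].
Qed.

Lemma scott_reduct_typ n : typ (fix_const (S n)) [] (scott_reduct n) (fix_ty 1).
Proof.
  destruct n as [|j]; simpl.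
  - apply t_const, fix_const_SI.
  - eapply t_app; [apply (S_chain_typ _ _ _ _ 0) | apply I_comb_typ].
    apply t_const. rewrite Nat.add_comm. constructor. lia.
Qed.

Lemma ty_noncyclic A B : A <> Arr A B.
Proof. revert B; induction A; intros B H; inversion H; subst; eapply IHA1; eauto. Qed.

Ltac inv_fix_typ H :=
  inversion H; subst; clear H;
  try match goal with Hc : fix_const _ _ _ |- _ => solve [inversion Hc] end.

Lemma self_app_untypable n G i T : ~ typ (fix_const n) G (App (Var i) (Var i)) T.
Proof.
  intros H. inv_fix_typ H.
  repeat match goal with H : typ _ _ (Var _) _ |- _ => inv_fix_typ H end.
  match goal with H1 : nth_error G i = Some ?X, H2 : nth_error G i = Some ?Y |- _ =>
    rewrite H1 in H2; injection H2 as H2 end.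
  eapply ty_noncyclic; eauto.
Qed.

Ltac untypable :=
  repeat match goal with
  | H : typ (fix_const _) _ (App (Var ?i) (Var ?i)) _ |- _ =>
      exfalso; eapply self_app_untypable; exact H
  | H : typ (fix_const _) _ (Lam _) _ |- _ => inv_fix_typ H
  | H : typ (fix_const _) _ (App _ _) _ |- _ => inv_fix_typ H
  end.

Lemma omega_SI_untypable n G T : ~ typ (fix_const n) G omega_SI T.
Proof. intros H. unfold omega_SI in H. untypable. Qed.

Lemma omega_SS_untypable n G T : ~ typ (fix_const n) G omega_SS T.
Proof. intros H. unfold omega_SS in H. untypable. Qed.

Lemma Omega_untypable n G T : ~ typ (fix_const n) G Omega T.
Proof. intros H. unfold Omega in H. untypable. Qed.

Lemma fix_const_beta n t A t' G :
  fix_const n t A -> beta t t' -> typ (fix_const n) G t' A.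
Proof.
  intros Hc Hb. destruct Hc as [|n Hn]; inversion Hb as [? ? | ? ? ? Hs | ? ? ? Hs |]; subst;
    try (destruct (beta_not_normal _ _ Hs) as [Hs' _]; simpl in Hs'; tauto).
  - cbn. apply t_lam. eapply t_app; [apply t_var; reflexivity|].
    eapply t_app; [apply t_const, fix_const_SI | apply t_var; reflexivity].
  - destruct n as [|[|j]]; [lia|lia|]. cbn.
    apply t_lam, t_lam. eapply t_app; [eapply t_app; apply t_var; reflexivity|].
    eapply t_app; [|apply t_var; reflexivity].
    eapply t_app; [|apply t_var; reflexivity].
    apply t_const. constructor. lia.
Qed.

Lemma fix_typ_red n G t t' T : red t t' -> typ (fix_const n) G t T -> typ (fix_const n) G t' T.
Proof.
  apply typ_red; intros *; [destruct 1; reflexivity | destruct 1; reflexivity | |].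
  - inversion 1.
  - apply fix_const_beta.
Qed.

Definition is_fix (t : term) : bool :=
  if term_eq_dec t fix_SI then true else if term_eq_dec t fix_SS then true else false.

(* [fold_fix (length G) t] turns the constants of [t] into the variable just past [G]. *)
Fixpoint fold_fix (d : nat) (t : term) : term :=
  match t with
  | Var n => Var n
  | App a b => if is_fix t then Var d else App (fold_fix d a) (fold_fix d b)
  | Lam b => Lam (fold_fix (S d) b)
  end.

Lemma fold_fix_typ n G t T :
  typ (fix_const n) G t T -> ptyp (G ++ [fix_ty n]) (fold_fix (length G) t) T.
Proof.
  induction 1 as [G x A Hx|G A B b _ IH|G A B f a Hf IHf Ha IHa|G t A Hc].
  - constructor. rewrite nth_error_app1; auto. apply nth_error_Some; congruence.
  - constructor. exact IH.
  - simpl. unfold is_fix.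
    destruct (term_eq_dec (App f a) fix_SI) as [E|_].
    { injection E as -> _. exfalso; eapply omega_SI_untypable; eauto. }
    destruct (term_eq_dec (App f a) fix_SS) as [E|_].
    { injection E as -> _. exfalso; eapply omega_SS_untypable; eauto. }
    econstructor; eauto.
  - assert (Hd : fold_fix (length G) t = Var (length G)).
    { destruct Hc; [change fix_SI with (App omega_SI omega_SI) at 1
                    | change fix_SS with (App omega_SS omega_SS) at 1];
        cbn [fold_fix]; unfold is_fix; repeat destruct term_eq_dec; try reflexivity;
        exfalso; match goal with H : _ <> _ |- _ => now apply H end. }
    rewrite Hd. constructor. rewrite nth_error_app2, Nat.sub_diag by lia.
    destruct Hc; reflexivity.
Qed.

Definition apps (h : term) (l : list term) : term := fold_left App l h.

Lemma neutral_spine t : neutral t -> exists h l, t = apps (Var h) l.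
Proof.
  induction t as [x|f IHf a _|b _]; simpl; intros H.
  - exists x, []. reflexivity.
  - destruct (IHf (proj1 H)) as [h [l ->]].
    exists h, (l ++ [a]). unfold apps. rewrite fold_left_app. reflexivity.
  - contradiction.
Qed.

Lemma ptyp_apps_arity G f l T :
  ptyp G (apps f l) T -> exists A, ptyp G f A /\ arity A = length l + arity T.
Proof.
  revert f; induction l as [|a l IH]; intros f H; simpl in *.
  - exists T; auto.
  - destruct (IH _ H) as [A [HA E]]. destruct (ptyp_app_inv _ _ _ _ HA) as [C [Hf _]].
    exists (Arr C A). split; auto. simpl; lia.
Qed.

Lemma ptyp_spine_arity G h l T :
  ptyp G (apps (Var h) l) T -> exists A, nth_error G h = Some A /\ arity A = length l + arity T.
Proof.
  intros H. destruct (ptyp_apps_arity _ _ _ _ H) as [A [HA E]].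
  exists A. split; auto using ptyp_var_inv.
Qed.

(* The normal forms of type [fix_ty 1] in context [x : fix_ty n] are [x a_1 ... a_(n-1)]
   and [\z. z (... (z (x a_1 ... a_n)))]. *)
Lemma normal_body_index_unique b p q : normal b ->
  ptyp [Arr Base Base; fix_ty p] b Base -> ptyp [Arr Base Base; fix_ty q] b Base -> p = q.
Proof.
  induction b as [x|b1 _ b2 IH2|b _]; intros Nb Hp Hq.
  - apply ptyp_var_inv in Hp, Hq. destruct x as [|[|[]]]; simpl in *; try discriminate.
    injection Hp as Hp. injection Hq as Hq.
    rewrite <- (arity_fix_ty p), <- (arity_fix_ty q), Hp, Hq. reflexivity.
  - destruct (neutral_spine (App b1 b2) Nb) as [h [l E]]. rewrite E in Hp, Hq.
    destruct (ptyp_spine_arity _ _ _ _ Hp) as [Ap [HAp Ep]].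
    destruct (ptyp_spine_arity _ _ _ _ Hq) as [Aq [HAq Eq]].
    destruct h as [|[|[]]]; simpl in *; try discriminate.
    + injection HAp as <-. destruct l as [|x [|]]; simpl in *; try lia.
      injection E as -> ->.
      assert (Harg : forall r, ptyp [Arr Base Base; fix_ty r] (App (Var 0) x) Base ->
                               ptyp [Arr Base Base; fix_ty r] x Base).
      { intros r H. destruct (ptyp_app_inv _ _ _ _ H) as [C [H0 Hx]].
        apply ptyp_var_inv in H0. injection H0 as <-. exact Hx. }
      apply IH2; auto. apply Nb.
    + injection HAp as <-. injection HAq as <-. rewrite arity_fix_ty in *. lia.
  - destruct (ptyp_lam_inv _ _ _ Hp) as [? [? [E _]]]. discriminate.
Qed.

Lemma normal_index_unique v n m : normal v ->
  ptyp [fix_ty n] v (fix_ty 1) -> ptyp [fix_ty m] v (fix_ty 1) -> n = m.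
Proof.
  intros Nv Hn Hm. destruct v as [x|f a|b].
  3: { destruct (ptyp_lam_inv _ _ _ Hn) as [? [? [E Hb]]]. injection E as <- <-.
       destruct (ptyp_lam_inv _ _ _ Hm) as [? [? [E Hb']]]. injection E as <- <-.
       exact (normal_body_index_unique b n m Nv Hb Hb'). }
  all: match type of Nv with normal ?t => change (neutral t) in Nv end.
  all: apply neutral_spine in Nv as [h [l E]]; rewrite E in Hn, Hm.
  all: destruct (ptyp_spine_arity _ _ _ _ Hn) as [An [HAn En]].
  all: destruct (ptyp_spine_arity _ _ _ _ Hm) as [Am [HAm Em]].
  all: destruct h as [|[]]; simpl in *; try discriminate.
  all: injection HAn as <-; injection HAm as <-; rewrite !arity_fix_ty in *; lia.
Qed.

Lemma fix_const_index_unique t n m :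
  typ (fix_const n) [] t (fix_ty 1) -> typ (fix_const m) [] t (fix_ty 1) -> n = m.
Proof.
  intros Hn Hm. apply fold_fix_typ in Hn, Hm. simpl in Hn, Hm.
  destruct (weak_normalization _ _ _ Hn) as [v [Hv Nv]].
  apply (normal_index_unique v); eauto using ptyp_red.
Qed.

Lemma U_succ_inj n m : beta_eq (U (S n)) (U (S m)) -> n = m.
Proof.
  intros H.
  assert (Hr : beta_eq (scott_reduct n) (scott_reduct m)).
  { eapply rst_trans; [apply rst_sym, red_beta_eq, U_succ_red|].
    eapply rst_trans; [exact H | apply red_beta_eq, U_succ_red]. }
  destruct (church_rosser _ _ Hr) as [t [Hn Hm]].
  enough (S n = S m) by lia.
  apply (fix_const_index_unique t); eauto using fix_typ_red, scott_reduct_typ.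
Qed.

Lemma U0_not_beta_eq_succ n : ~ beta_eq (U 0) (U (S n)).
Proof.
  intros H.
  assert (Hr : beta_eq Omega (App (scott_reduct n) I_comb)).
  { eapply rst_trans; [apply rst_sym, red_beta_eq, U0_I_red|].
    eapply rst_trans; [apply beta_eq_appl, H | apply red_beta_eq, red_appl, U_succ_red]. }
  destruct (church_rosser _ _ Hr) as [t [Ht1 Ht2]]. apply Omega_red in Ht1 as ->.
  apply (Omega_untypable (S n) [] Base). eapply fix_typ_red; [exact Ht2|].
  eapply t_app; [apply scott_reduct_typ | apply t_lam, t_var; reflexivity].
Qed.

Theorem corollary4p17 : forall n m : nat, n <> m -> ~ beta_eq (U n) (U m).
Proof.
  intros [|n] [|m] Hnm H.
  - apply Hnm; reflexivity.
  - exact (U0_not_beta_eq_succ m H).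
  - exact (U0_not_beta_eq_succ n (rst_sym _ _ _ _ H)).
  - apply Hnm; f_equal; exact (U_succ_inj n m H).
Qed.
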